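(* Let $\Psi\colon V\to W$ be a morphism of FI-modules and let $E\geq 0$. Assume that $W$ is centrally stable starting at $E$, that $V$ is boundedly generated in degree $E$, and that for all finite sets $J\subset\mathbb{N}$ with $|J|\leq E$ the map $\Psi_J\colon V_J\to W_J$ is an isomorphism. Then $\Psi$ is an isomorphism, i.e. $\Psi_J$ is an isomorphism for every finite $J\subset\mathbb{N}$.
   Context: $\mathrm{FI}$ is the category of finite subsets of $\mathbb{N}$ and injections. An FI-module $W$ is a functor from $\mathrm{FI}$ to abelian groups: abelian groups $W_I$ and homomorphisms $W_f\colon W_I\to W_J$ for injections $f$, functorially. For $I\subset J$ write $W_I^J=W_f$ for the inclusion $f$. A morphism $\Psi\colon V\to W$ is a natural transformation (maps $\Psi_I\colon V_I\to W_I$ commuting with all $V_f,W_f$). $W$ is boundedly generated in degree $A$ if for every finite $J$, the map $\bigoplus_{I\subset J,|I|\leq A}W_I\to W_J$ induced by the $W_I^J$ is surjective. For finite $J$, let $\eta\colon\bigoplus_{K\subset J,|K|=|J|-2}W_K\to\bigoplus_{I\subset J,|I|=|J|-1}W_I$ send $x\in W_K$ to $(W_K^{I_1}(x),-W_K^{I_2}(x))\in W_{I_1}\oplus W_{I_2}$, where $I_1,I_2$ are the two sets with $K\subset I_i\subset J$, $|I_i|=|J|-1$. The $J$-central stabilization $\widetilde{W}_J$ is the cokernel of $\eta$; the maps $W_I^J$ induce a natural map $\widetilde{W}_J\to W_J$. $W$ is centrally stable starting at $E$ if $\widetilde{W}_J\to W_J$ is an isomorphism for every finite $J$ with $|J|>E$.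 *)

From HB Require Import structures.
From mathcomp Require Import all_boot all_order all_algebra.
From mathcomp Require Import finmap.
Unset Printing Implicit Defensive.
Import GRing.Theory.
Local Open Scope fset_scope.
Local Open Scope ring_scope.

(* Finite subsets of N are {fset nat}.  An injection I -> J is represented by
   a function f : nat -> nat that is injective on I and maps I into J; only
   its values on I matter (see FImap_ext). *)
Definition FIinj (I J : {fset nat}) (f : nat -> nat) : Prop :=
  {in I &, injective f} /\ (forall x, x \in I -> f x \in J).

Record FImod := {
  FIobj :> {fset nat} -> zmodType;
  FImap : forall I J : {fset nat}, (nat -> nat) -> FIobj I -> FIobj J;
  FImap_add : forall I J f, FIinj I J f -> forall x y : FIobj I,
      FImap I J f (x + y) = FImap I J f x + FImap I J f y;
  FImap_ext : forall I J f g, FIinj I J f -> {in I, f =1 g} ->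
      forall x, FImap I J f x = FImap I J g x;
  FImap_id : forall I (x : FIobj I), FImap I I id x = x;
  FImap_comp : forall I J K f g, FIinj I J f -> FIinj J K g ->
      forall x, FImap I K (g \o f) x = FImap J K g (FImap I J f x)
}.

Arguments FImap : clear implicits.
Definition incl (W : FImod) (I J : {fset nat}) : W I -> W J := FImap W I J id.

Definition is_FImorph (V W : FImod) (Psi : forall I, V I -> W I) : Prop :=
  (forall I (x y : V I), Psi I (x + y) = Psi I x + Psi I y) /\
  (forall I J f, FIinj I J f -> forall x : V I,
      Psi J (FImap V I J f x) = FImap W I J f (Psi I x)).

Definition bounded_gen (W : FImod) (A : nat) : Prop :=
  forall (J : {fset nat}) (w : W J), exists x : (forall I, W I),
    w = \sum_(I <- fpowerset J | (#|` I| <= A)%N) incl W I J (x I).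

Definition codim1 (J I : {fset nat}) : bool := (I `<=` J) && (#|` I|.+1 == #|` J|)%N.
Definition codim2 (J K : {fset nat}) : bool := (K `<=` J) && (#|` K|.+2 == #|` J|)%N.

(* For K ⊂ I ⊂ J of codimensions 2,1: sign +1 if I = I_1 (the element of I\K
   is the smaller element of J\K), -1 otherwise (I = I_2). *)
Definition eta_sign (J K I : {fset nat}) : bool :=
  has (fun a => has (fun b => (a < b)%N) (enum_fset (J `\` I))) (enum_fset (I `\` K)).

Definition eta (W : FImod) (J : {fset nat}) (y : forall K, W K) (I : {fset nat}) : W I :=
  \sum_(K <- fpowerset J | codim2 J K && (K `<=` I))
     (if eta_sign J K I then incl W K I (y K) else - incl W K I (y K)).

Definition sigma (W : FImod) (J : {fset nat}) (x : forall I, W I) : W J :=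
  \sum_(I <- fpowerset J | codim1 J I) incl W I J (x I).

(* The natural map from the J-central stabilization coker(eta) to W_J is an
   isomorphism: sigma is surjective and ker sigma ⊆ im eta (im eta ⊆ ker sigma
   always holds, so the induced map on coker eta is well defined). *)
Definition central_iso (W : FImod) (J : {fset nat}) : Prop :=
  (forall w : W J, exists x : (forall I, W I), w = sigma W J x) /\
  (forall x : (forall I, W I), sigma W J x = 0 ->
     exists y : (forall K, W K), forall I, codim1 J I -> x I = eta W J y I).

Definition centrally_stable (W : FImod) (E : nat) : Prop :=
  forall J : {fset nat}, (E < #|` J|)%N -> central_iso W J.

From mathcomp Require Import all_boot all_order all_algebra.
From mathcomp Require Import finmap.
From mathcomp Require Import zify.
Import GRing.Theory.
Local Open Scope fset_scope.
Local Open Scope ring_scope.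

(* Below degree E the hypothesis applies.  Above it, W_J is
   the cokernel of eta, i.e. it is presented by the W_I (|I| = |J|-1) modulo
   the relations coming from the W_K (|K| = |J|-2), and Psi is already an
   isomorphism on all of these.  Surjectivity of Psi_J follows at once; for
   injectivity, bounded generation of V writes any v in V_J as sigma(x), and if
   Psi_J v = 0 then Psi(x) = eta(y) for some y, which lifts through Psi to show
   x = eta(z), whence v = sigma(eta(z)) = 0. *)

Section AdditiveMaps.
Context {U V : zmodType} {f : U -> V} (fD : {morph f : x y / x + y}).

Lemma addmorph0 : f 0 = 0.
Proof. by apply/eqP; rewrite -(subrr (f 0)) -{2}(addr0 0) fD addrK. Qed.

Lemma addmorphN x : f (- x) = - f x.
Proof. by apply/eqP; rewrite -subr_eq0 opprK -fD addNr addmorph0. Qed.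

Lemma addmorph_sum (I : Type) (r : seq I) (P : pred I) (F : I -> U) :
  f (\sum_(i <- r | P i) F i) = \sum_(i <- r | P i) f (F i).
Proof. by apply: big_morph; [exact: fD | exact: addmorph0]. Qed.

Lemma addmorph_inj : (forall x, f x = 0 -> x = 0) -> injective f.
Proof.
move=> ker0 x y fxy; apply/eqP; rewrite -subr_eq0; apply/eqP/ker0.
by rewrite fD addmorphN fxy subrr.
Qed.

End AdditiveMaps.

Lemma inj_surj_bij (A : choiceType) (B : eqType) (f : A -> B) :
  injective f -> (forall b, exists a, f a = b) -> bijective f.
Proof.
move=> finj fsurj.
have fsurjb b : exists a, f a == b by have [a <-] := fsurj b; exists a.
exists (fun b => xchoose (fsurjb b)) => [a|b]; last exact/eqP/(xchooseP (fsurjb b)).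
by apply: finj; apply/eqP/(xchooseP (fsurjb (f a))).
Qed.

Lemma lift_family {K : choiceType} {A B : K -> zmodType} (f : forall k, A k -> B k)
    (P : pred K) : (forall k, P k -> bijective (f k)) ->
  forall y : forall k, B k, exists x : forall k, A k, forall k, P k -> f k (x k) = y k.
Proof.
move=> fbij y.
have lift k : exists u, P k ==> (f k u == y k).
  case: (boolP (P k)) => [Pk|_]; last by exists 0.
  by have [g _ gK] := fbij k Pk; exists (g (y k)); rewrite gK eqxx.
by exists (fun k => xchoose (lift k)) => k Pk; exact/eqP/(implyP (xchooseP (lift k))).
Qed.

Lemma big_seq_pred2 (T : eqType) (R : zmodType) (r : seq T) (F : T -> R) x1 x2 :
  uniq r -> x1 != x2 -> x1 \in r -> x2 \in r ->
  \sum_(i <- r | (i == x1) || (i == x2)) F i = F x1 + F x2.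
Proof.
move=> ur n12 x1r x2r.
rewrite -big_filter (bigD1_seq x1) ?mem_filter ?eqxx ?filter_uniq //=.
rewrite -big_filter (bigD1_seq x2) ?mem_filter ?eqxx ?orbT ?filter_uniq //=;
  last by rewrite eq_sym n12.
rewrite big1_seq ?addr0 // => i /andP [i2]; rewrite !mem_filter => /andP [i1 /andP [+ _]].
by rewrite (negbTE i1) (negbTE i2).
Qed.

Lemma codim1_lt {J I} : codim1 J I -> (#|` I| < #|` J|)%N.
Proof. by case/andP => _ /eqP <-. Qed.

Lemma codim2_lt {J K} : codim2 J K -> (#|` K| < #|` J|)%N.
Proof. by case/andP => _ /eqP <-. Qed.

Lemma codim2_pair {J K} : codim2 J K -> exists a b, (a < b)%N /\ J `\` K = [fset a; b].
Proof.
case/andP => KJ /eqP cK.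
have cD : #|` J `\` K| = 2%N by rewrite cardfsDS // -cK; lia.
have /fset0Pn [x xD] : J `\` K != fset0 by rewrite -cardfs_gt0 cD.
have /cardfs1P [y Dxy] : #|` (J `\` K) `\ x| == 1%N.
  by move: cD; rewrite (cardfsD1 x) xD add1n => -[->].
have DE : J `\` K = [fset x; y] by rewrite -(fsetD1K xD) Dxy.
have : x != y by move: cD; rewrite DE cardfs2; case: eqP.
case: ltngtP => // [xy|yx] _; first by exists x, y.
by exists y, x; rewrite DE fsetUC.
Qed.

Lemma codim1_supsetE {J K a b} : codim2 J K -> J `\` K = [fset a; b] ->
  forall I, (codim1 J I && (K `<=` I)) = (I == a |` K) || (I == b |` K).
Proof.
case/andP => KJ /eqP cK DE I.
have inD c : (c \in J) && (c \notin K) = (c == a) || (c == b).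
  by rewrite -in_fset2 -DE in_fsetD andbC.
apply/idP/idP.
- case/andP => /andP [IJ /eqP cI] KI.
  have /cardfs1P [c Ec] : #|` I `\` K| == 1%N by rewrite cardfsDS //; lia.
  have /fsetDP [cI' cK'] : c \in I `\` K by rewrite Ec fset11.
  have -> : I = c |` K.
    apply/fsetP => d; rewrite in_fset1U; case: (boolP (d \in K)) => dK.
      by rewrite orbT (fsubsetP KI).
    by rewrite orbF -in_fset1 -Ec in_fsetD dK.
  have /orP [/eqP -> | /eqP ->] : (c == a) || (c == b) by rewrite -inD (fsubsetP IJ).
    by rewrite eqxx.
  by rewrite eqxx orbT.
- have ok c : (c \in J) && (c \notin K) -> codim1 J (c |` K) && (K `<=` c |` K).
    case/andP => cJ cK'; rewrite fsubsetU1 andbT /codim1 cardfsU1 cK' -cK.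
    by rewrite fsubUset fsub1set cJ KJ add1n eqxx.
  by case/orP => /eqP ->; apply: ok; rewrite inD eqxx ?orbT.
Qed.

Lemma eta_sign_pair {J K a b} : J `\` K = [fset a; b] -> (a < b)%N ->
  eta_sign J K (a |` K) && ~~ eta_sign J K (b |` K).
Proof.
move=> DE ab.
have notK c : c \in [fset a; b] -> c \notin K by rewrite -DE => /fsetDP [].
have addK c : c \notin K -> (c |` K) `\` K = [fset c].
  by move=> cK; apply/fsetP => x; rewrite !inE; case: eqP => [->|_]; rewrite /= ?cK ?andNb.
have remK d : J `\` (d |` K) = [fset a; b] `\ d by rewrite fsetUC -fsetDDl DE.
have ba : b \notin [fset a] by rewrite in_fset1 gtn_eqF.
have ab' : a \notin [fset b] by rewrite in_fset1 ltn_eqF.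
rewrite /eta_sign !remK !addK ?notK ?fset22 ?fset21 // [in X in _ && X]fsetUC.
rewrite !fsetU1K //; apply/andP; split.
  by apply/hasP; exists a; rewrite ?fset11 //; apply/hasP; exists b; rewrite ?fset11.
by apply/hasPn => _ /fset1P ->; apply/hasPn => _ /fset1P ->; rewrite ltnNge ltnW.
Qed.

(* The only codimension-one sets between K and J are a |` K and b |` K, and
   eta_sign gives them opposite signs. *)
Lemma eta_sign_cancel (R : zmodType) J K (v : R) : codim2 J K ->
  \sum_(I <- fpowerset J | codim1 J I && (K `<=` I)) (if eta_sign J K I then v else - v) = 0.
Proof.
move=> cK; have [a [b [ab DE]]] := codim2_pair cK.
have supset I : (I == a |` K) || (I == b |` K) -> codim1 J I.
  by rewrite -(codim1_supsetE cK DE) => /andP [].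
have /andP [aKJ _] : codim1 J (a |` K) by apply: supset; rewrite eqxx.
have /andP [bKJ _] : codim1 J (b |` K) by apply: supset; rewrite eqxx orbT.
have abK : a |` K != b |` K.
  have /fsetDP [_ aK] : a \in J `\` K by rewrite DE fset21.
  apply/eqP => abE; have : a \in b |` K by rewrite -abE fset1U1.
  by rewrite in_fset1U ltn_eqF // (negbTE aK).
under eq_bigl => I do rewrite (codim1_supsetE cK DE).
rewrite big_seq_pred2 ?fset_uniq ?fpowersetE //.
by have /andP [-> /negbTE ->] := eta_sign_pair DE ab; rewrite subrr.
Qed.

Lemma incl_FIinj I J : I `<=` J -> FIinj I J id.
Proof. by move=> IJ; split=> [x y _ _ //|x]; apply: (fsubsetP IJ). Qed.

Section Inclusions.
Context {U : FImod} {I J : {fset nat}} (IJ : I `<=` J).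

Lemma inclD : {morph incl U I J : x y / x + y}.
Proof. by move=> x y; apply: FImap_add; apply: incl_FIinj. Qed.

Lemma incl0 : incl U I J 0 = 0.
Proof. exact: (addmorph0 inclD). Qed.

Lemma inclN x : incl U I J (- x) = - incl U I J x.
Proof. exact: (addmorphN inclD). Qed.

Lemma incl_sum (T : Type) (r : seq T) (P : pred T) (F : T -> U I) :
  incl U I J (\sum_(i <- r | P i) F i) = \sum_(i <- r | P i) incl U I J (F i).
Proof. exact: (addmorph_sum inclD). Qed.

Lemma incl_comp K x : K `<=` I -> incl U I J (incl U K I x) = incl U K J x.
Proof. by move=> KI; rewrite /incl -FImap_comp //; apply: incl_FIinj. Qed.

End Inclusions.

Section Stabilization.
Context {U : FImod} {J : {fset nat}}.

Lemma eq_sigma {x y : forall I, U I} :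
  (forall I, codim1 J I -> x I = y I) -> sigma U J x = sigma U J y.
Proof. by move=> xy; apply: eq_bigr => I /xy ->. Qed.

Lemma eq_eta {y y' : forall K, U K} I :
  (forall K, codim2 J K -> y K = y' K) -> eta U J y I = eta U J y' I.
Proof. by move=> yy; apply: eq_bigr => K /andP [/yy -> _]. Qed.

Lemma sigmaD (x y : forall I, U I) :
  sigma U J (fun I => x I + y I) = sigma U J x + sigma U J y.
Proof. by rewrite /sigma -big_split; apply: eq_bigr => I /andP [IJ _]; apply: inclD. Qed.

Lemma sigma0 : sigma U J (fun _ => 0) = 0.
Proof. by apply: big1 => I /andP [IJ _]; apply: incl0. Qed.

Lemma incl_sigma I I' (w : U I) : I `<=` I' -> codim1 J I' ->
  incl U I J w = sigma U J (fun L => if L == I' then incl U I L w else 0).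
Proof.
move=> II' cI'; have I'J : I' `<=` J by case/andP: cI'.
rewrite /sigma -big_filter (bigD1_seq I') ?mem_filter ?cI' ?fpowersetE
  ?filter_uniq ?fset_uniq //= eqxx incl_comp //.
rewrite big1_seq ?addr0 // => L /andP [LI']; rewrite mem_filter => /andP [/andP [LJ _] _].
by rewrite (negbTE LI') incl0.
Qed.

Lemma sigma_eta (z : forall K, U K) : sigma U J (eta U J z) = 0.
Proof.
pose v K := incl U K J (z K).
have inclJ_eta I : codim1 J I -> incl U I J (eta U J z I) =
    \sum_(K <- fpowerset J | codim2 J K && (K `<=` I))
      (if eta_sign J K I then v K else - v K).
  case/andP => IJ _; rewrite incl_sum //; apply: eq_bigr => K /andP [_ KI].
  by case: ifP => _; rewrite ?inclN ?incl_comp.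
rewrite /sigma (eq_bigr _ inclJ_eta).
rewrite (exchange_big_dep (codim2 J)) /=; last by move=> I K _ /andP [].
by apply: big1 => K cK; under eq_bigl => I do rewrite cK /=; apply: eta_sign_cancel.
Qed.

End Stabilization.

Lemma bounded_gen_sigma (U : FImod) E J : bounded_gen U E -> (E < #|` J|)%N ->
  forall w : U J, exists x, w = sigma U J x.
Proof.
move=> genU EJ w; have [g ->] := genU J w.
rewrite big_seq_cond; apply: (big_ind (fun s => exists x, s = sigma U J x)).
- by exists (fun _ => 0); rewrite sigma0.
- by move=> _ _ [x ->] [y ->]; exists (fun I => x I + y I); rewrite sigmaD.
move=> I /andP [IJ cI]; rewrite fpowersetE in IJ.
(* Since |I| <= E < |J|, I misses some c in J and factors through J `\ c. *)
have /fsubsetPn [c cJ cI'] : ~~ (J `<=` I).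
  by apply/negP => /fsubset_leq_card; lia.
have cJc : codim1 J (J `\ c) by rewrite /codim1 fsubD1set [#|` J|](cardfsD1 c) cJ add1n eqxx.
by eexists; apply: incl_sigma cJc; rewrite fsubsetD1 IJ cI'.
Qed.

Section Morphism.
Context {V W : FImod} {Psi : forall I, V I -> W I} (PsiM : is_FImorph V W Psi).

Lemma morphD I : {morph Psi I : x y / x + y}.
Proof. exact: PsiM.1. Qed.

Lemma morph_incl K I x : K `<=` I -> Psi I (incl V K I x) = incl W K I (Psi K x).
Proof. by move=> KI; apply: PsiM.2; apply: incl_FIinj. Qed.

Lemma morph_sigma J x : Psi J (sigma V J x) = sigma W J (fun I => Psi I (x I)).
Proof.
by rewrite (addmorph_sum (morphD J)); apply: eq_bigr => I /andP [IJ _]; apply: morph_incl.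
Qed.

Lemma morph_eta J z I : Psi I (eta V J z I) = eta W J (fun K => Psi K (z K)) I.
Proof.
rewrite (addmorph_sum (morphD I)); apply: eq_bigr => K /andP [_ KI].
by case: ifP => _; rewrite ?(addmorphN (morphD I)) morph_incl.
Qed.

Section InductiveStep.
Context {J : {fset nat}} (Wiso : central_iso W J)
  (Psi_bij : forall I, (#|` I| < #|` J|)%N -> bijective (Psi I)).

Lemma morph_surj_step w : exists v, Psi J v = w.
Proof.
have [x ->] := Wiso.1 w.
have [u Psiu] := lift_family Psi (codim1 J) (fun I cI => Psi_bij _ (codim1_lt cI)) x.
by exists (sigma V J u); rewrite morph_sigma; apply: eq_sigma.
Qed.

Lemma morph_sigma_kernel x : Psi J (sigma V J x) = 0 -> sigma V J x = 0.
Proof.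
rewrite morph_sigma => /Wiso.2 [y Psix].
have [z Psiz] := lift_family Psi (codim2 J) (fun K cK => Psi_bij _ (codim2_lt cK)) y.
have x_eta I : codim1 J I -> x I = eta V J z I.
  move=> cI; apply: (bij_inj (Psi_bij _ (codim1_lt cI))).
  by rewrite Psix // morph_eta; apply: eq_eta => K cK; rewrite Psiz.
by rewrite (eq_sigma x_eta) sigma_eta.
Qed.

Lemma morph_bij_step : (forall v : V J, exists x, v = sigma V J x) -> bijective (Psi J).
Proof.
move=> Vsigma; apply: inj_surj_bij; last exact: morph_surj_step.
by apply: (addmorph_inj (morphD J)) => v; have [x ->] := Vsigma v; apply: morph_sigma_kernel.
Qed.

End InductiveStep.
End Morphism.

Theorem lemma2p23 (V W : FImod) (Psi : forall I : {fset nat}, V I -> W I) (E : nat) :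
  is_FImorph V W Psi ->
  centrally_stable W E ->
  bounded_gen V E ->
  (forall J : {fset nat}, (#|` J| <= E)%N -> bijective (Psi J)) ->
  forall J : {fset nat}, bijective (Psi J).
Proof.
move=> PsiM Wstable Vgen Psi_small.
suff bij_card n J : #|` J| = n -> bijective (Psi J) by move=> J; apply: bij_card.
elim/ltn_ind: n J => n IH J Jn; subst n.
have [/Psi_small //|EJ] := leqP #|` J| E.
apply: (morph_bij_step PsiM (Wstable J EJ)); last exact: bounded_gen_sigma Vgen EJ.
by move=> I IJ; apply: IH _ IJ _ erefl.
Qed.
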